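(* Let $(k,|\cdot|)$ be a complete non-Archimedean field of characteristic $p>0$ with nontrivial value group. The following are equivalent: (i) $T_n(k)$ is Frobenius split for each integer $n>0$; (ii) $T_n(k)$ has a nonzero $p^{-1}$-linear map for each integer $n>0$; (iii) there exists an integer $n>0$ for which $T_n(k)$ has a nonzero $p^{-1}$-linear map; (iv) $T_1(k)$ has a nonzero $p^{-1}$-linear map; (v) $T_1(k)$ is Frobenius split; (vi) there exists a nonzero continuous $k$-linear map $f\colon k^{1/p}\to k$.
   Context: A non-Archimedean field $(k,|\cdot|)$ is a field with a map $|\cdot|\colon k\to\mathbb{R}_{\ge0}$ satisfying $|x|=0$ iff $x=0$, $|x+y|\le\max\{|x|,|y|\}$, $|xy|=|x||y|$, assumed complete and with $|k^\times|\ne\{1\}$. The Tate algebra $T_n(k)$ is the subring of $k[[X_1,\dots,X_n]]$ of series $\sum_\nu a_\nu X^\nu$ with $|a_\nu|\to0$ as $\nu_1+\dots+\nu_n\to\infty$. For a ring $R$ of characteristic $p$, $F_{R*}R$ is $R$ with $R$-module structure $r\cdot x=r^px$; an $R$-linear map $F_{R*}R\to R$ is a $p^{-1}$-linear map; $R$ is Frobenius split if some $p^{-1}$-linear map sends $1\mapsto1$. The field $k^{1/p}$ of $p$-th roots of elements of $k$ (identified with $F_{k*}k$) carries the unique absolute value extending $|\cdot|$, making it a normed $k$-vector space; continuity refers to the metric topologies on $k^{1/p}$ and $k$. *)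

From Stdlib Require Import Reals.
From HB Require Import structures.
From mathcomp Require Import all_boot all_order all_algebra.
Set Implicit Arguments. Unset Strict Implicit. Unset Printing Implicit Defensive.
Import GRing.Theory.
Local Open Scope ring_scope.

Record nonarch_abs (k : fieldType) (abs : k -> R) : Prop := {
  abs_ge0 : forall x : k, Rle R0 (abs x);
  abs_eq0 : forall x : k, abs x = R0 <-> x = 0;
  abs_ultra : forall x y : k, Rle (abs (x + y)) (Rmax (abs x) (abs y));
  abs_mul : forall x y : k, abs (x * y) = Rmult (abs x) (abs y) }.

Definition abs_complete (k : fieldType) (abs : k -> R) : Prop :=
  forall u : nat -> k,
    (forall eps, Rlt R0 eps -> exists N : nat, forall m n : nat,
        (N <= m)%N -> (N <= n)%N -> Rlt (abs (u m - u n)) eps) ->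
    exists l : k, forall eps, Rlt R0 eps -> exists N : nat, forall n : nat,
        (N <= n)%N -> Rlt (abs (u n - l)) eps.

Definition abs_nontrivial (k : fieldType) (abs : k -> R) : Prop :=
  exists x : k, x <> 0 /\ abs x <> R1.

Definition mi (n : nat) := {ffun 'I_n -> nat}.
Definition series (k : fieldType) (n : nat) := mi n -> k.
Definition deg (n : nat) (nu : mi n) : nat := (\sum_(i < n) nu i)%N.

Definition szero (k : fieldType) (n : nat) : series k n := fun _ => 0.
Definition sone (k : fieldType) (n : nat) : series k n :=
  fun nu => if nu == [ffun => 0%N] then 1 else 0.
Definition sadd (k : fieldType) (n : nat) (a b : series k n) : series k n :=
  fun nu => a nu + b nu.
(* Cauchy product: (ab)_nu = sum_{mu <= nu} a_mu b_{nu - mu} *)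
Definition smul (k : fieldType) (n : nat) (a b : series k n) : series k n :=
  fun nu =>
    \sum_(mu : {ffun 'I_n -> 'I_(deg nu).+1} | [forall i, (mu i <= nu i)%N])
      a [ffun i => nat_of_ord (mu i)] * b [ffun i => (nu i - mu i)%N].
Definition spow (k : fieldType) (n : nat) (a : series k n) (m : nat) : series k n :=
  iter m (smul a) (@sone k n).

Definition tate (k : fieldType) (abs : k -> R) (n : nat) (a : series k n) : Prop :=
  forall eps, Rlt R0 eps -> exists N : nat, forall nu : mi n,
    (N <= deg nu)%N -> Rlt (abs (a nu)) eps.

(* phi : F_* T_n(k) -> T_n(k) is T_n(k)-linear, i.e. a p^{-1}-linear map
   (phi is only relevant on T_n(k); it must map T_n(k) into T_n(k)). *)
Definition pinv_linear (k : fieldType) (abs : k -> R) (n p : nat)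
    (phi : series k n -> series k n) : Prop :=
  [/\ forall x, tate abs x -> tate abs (phi x),
      forall x y, tate abs x -> tate abs y -> phi (sadd x y) = sadd (phi x) (phi y)
    & forall r x, tate abs r -> tate abs x -> phi (smul (spow r p) x) = smul r (phi x)].

Definition has_nonzero_pinv_map (k : fieldType) (abs : k -> R) (n p : nat) : Prop :=
  exists phi : series k n -> series k n,
    pinv_linear abs p phi /\ exists x, tate abs x /\ phi x <> @szero k n.

Definition frobenius_split (k : fieldType) (abs : k -> R) (n p : nat) : Prop :=
  exists phi : series k n -> series k n,
    pinv_linear abs p phi /\ phi (@sone k n) = @sone k n.

(* k^{1/p} identified with F_* k (element x of F_* k <-> x^{1/p});
   its absolute value is |x^{1/p}| = |x|^{1/p}. *)
Definition root_abs (k : fieldType) (abs : k -> R) (p : nat) (x : k) : R :=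
  if Rlt_dec R0 (abs x) then Rpower (abs x) (Rinv (INR p)) else R0.

Definition has_nonzero_cont_map (k : fieldType) (abs : k -> R) (p : nat) : Prop :=
  exists f : k -> k,
    [/\ forall x y, f (x + y) = f x + f y,
        forall c x, f (c ^+ p * x) = c * f x,
        exists x, f x <> 0
      & forall x eps, Rlt R0 eps -> exists delta, Rlt R0 delta /\
          forall y, Rlt (root_abs abs p (y - x)) delta -> Rlt (abs (f y - f x)) eps].

From Stdlib Require Import Reals Lra Classical ClassicalEpsilon FunctionalExtensionality.
From HB Require Import structures.
From mathcomp Require Import all_boot all_order all_algebra.
From mathcomp Require Import mpoly.
Set Implicit Arguments. Unset Strict Implicit. Unset Printing Implicit Defensive.
Import GRing.Theory.
Local Open Scope ring_scope.

(* (vi) -> (i): normalise a continuous p^-1-linear f : k^(1/p) -> k so that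
   f 1 = 1; then x |-> sum_mu f (x_(p mu)) X^mu is a Frobenius splitting of
   T_n(k).  Indeed (sum r_b X^b)^p = sum r_b^p X^(p b) in characteristic p, so
   the coefficient of X^(p mu) in r^p x is sum_b r_b^p x_(p (mu - b)), and
   continuity of f at 0 keeps the image inside T_n(k).
   (iii) -> (vi): a nonzero p^-1-linear phi on T_n(k) is nonzero at some
   coefficient m on some monomial c X^a, since series divisible by (X_i^N)^p
   are sent into X_i^N T_n(k).  Then f c := (phi (c X^a))_m is p^-1-linear.
   If f were not continuous it would be unbounded near 0 (rescale by t^p with
   |t| > 1); choosing c_j -> 0 with |f c_j| dominating everything contributed
   by c_0, ..., c_(j-1), the series sum_j c_j X^(a + p j K e_0) is in T_n(k)
   but, by the ultrametric inequality, the coefficients of its image along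
   m + j K e_0 stay above a fixed bound.
   The remaining implications are formal. *)

Section MultiIndex.
Variable n : nat.

Definition mnm_of (nu : mi n) : 'X_{1..n} := [multinom nu i | i < n].
Definition mi_of (m : 'X_{1..n}) : mi n := [ffun i => m i].

Lemma mnm_ofE nu i : mnm_of nu i = nu i.
Proof. by rewrite mnmE. Qed.

Lemma mnm_ofK : cancel mnm_of mi_of.
Proof. by move=> nu; apply/ffunP=> i; rewrite ffunE mnm_ofE. Qed.

Lemma mi_ofK : cancel mi_of mnm_of.
Proof. by move=> m; apply/mnmP=> i; rewrite mnm_ofE ffunE. Qed.

Lemma mdeg_mnm_of nu : mdeg (mnm_of nu) = deg nu.
Proof. by rewrite mdegE /deg; apply: eq_bigr=> i _; rewrite mnm_ofE. Qed.

Lemma deg_mi_of m : deg (mi_of m) = mdeg m.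
Proof. by rewrite -mdeg_mnm_of mi_ofK. Qed.

Lemma mnm_of_addE (nu : mi n) (m1 m2 : 'X_{1..n}) i :
  mnm_of nu = (m1 + m2)%MM -> nu i = (m1 i + m2 i)%N.
Proof. by move/(congr1 (fun m : 'X_{1..n} => m i)); rewrite mnmDE mnm_ofE. Qed.

Lemma leq_mi_deg (nu : mi n) i : (nu i <= deg nu)%N.
Proof. by rewrite /deg (bigD1 i) //= leq_addr. Qed.

Lemma leq_deg (mu nu : mi n) : (forall i, mu i <= nu i)%N -> (deg mu <= deg nu)%N.
Proof. by move=> le; apply: leq_sum => i _; exact: le. Qed.

Definition mi_le (a nu : mi n) := [forall i, (a i <= nu i)%N].
Definition mi_add (a b : mi n) : mi n := [ffun i => (a i + b i)%N].
Definition mi_sub (nu a : mi n) : mi n := [ffun i => (nu i - a i)%N].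
Definition mi_scale (j : nat) (a : mi n) : mi n := [ffun i => (a i * j)%N].

Lemma deg_mi_add a b : deg (mi_add a b) = (deg a + deg b)%N.
Proof. by rewrite /deg -big_split /=; apply: eq_bigr => i _; rewrite ffunE. Qed.

Lemma deg_mi_scale j a : deg (mi_scale j a) = (deg a * j)%N.
Proof. by rewrite /deg big_distrl /=; apply: eq_bigr => i _; rewrite ffunE. Qed.

End MultiIndex.

Section SeriesProduct.
Variables (k : fieldType) (n : nat).
Implicit Types (r s x : series k n) (nu : mi n).

(* Coefficients of Cauchy products are computed on these truncations. *)
Definition strunc (d : nat) s : {mpoly k[n]} :=
  \sum_(b : 'X_{1..n < d}) s (mi_of b) *: 'X_[b].

Lemma mcoeff_strunc d s m :
  (strunc d s)@_m = if (mdeg m < d)%N then s (mi_of m) else 0.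
Proof.
rewrite /strunc raddf_sum /=.
under eq_bigr => b _ do rewrite mcoeffZ mcoeffX.
case: ifP => hm.
  rewrite (bigD1 (BMultinom hm)) //= eqxx mulr1 big1 ?addr0 // => b hb.
  case: eqP => [e|]; last by rewrite mulr0.
  by move: hb; rewrite -val_eqE /= e eqxx.
rewrite big1 // => b _; case: eqP => [e|]; last by rewrite mulr0.
by move: hm; rewrite -e bmdeg.
Qed.

Lemma smul_struncE (a b : series k n) nu d : (deg nu < d)%N ->
  smul a b nu = (strunc d a * strunc d b)@_(mnm_of nu).
Proof.
move=> hd; rewrite mcoeffM /smul; set D := deg nu.
have hD : (mdeg (mnm_of nu)).+1 = D.+1 by rewrite mdeg_mnm_of.
pose bmk (z : 'X_{1..n}) : 'X_{1..n < (mdeg (mnm_of nu)).+1} := insubd bm0 z.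
have bmkE (z : 'X_{1..n}) : (mdeg z <= D)%N -> val (bmk z) = z.
  by move=> hx; rewrite /bmk val_insubd ifT // hD ltnS.
pose lo (mu : {ffun 'I_n -> 'I_D.+1}) : mi n := [ffun i => nat_of_ord (mu i)].
pose hi (mu : {ffun 'I_n -> 'I_D.+1}) : mi n := [ffun i => (nu i - mu i)%N].
pose h mu := (bmk (mnm_of (lo mu)), bmk (mnm_of (hi mu))).
pose h' (kk : 'X_{1..n < (mdeg (mnm_of nu)).+1, (mdeg (mnm_of nu)).+1}) :
  {ffun 'I_n -> 'I_D.+1} := [ffun i => inord (kk.1 i)].
have ltD i m : (m <= nu i)%N -> (m < D.+1)%N.
  by move=> le; rewrite ltnS (leq_trans le) ?leq_mi_deg.
have hi_deg mu : (mdeg (mnm_of (hi mu)) <= D)%N.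
  by rewrite mdeg_mnm_of; apply: leq_deg => i; rewrite ffunE leq_subr.
have lo_deg (mu : {ffun 'I_n -> 'I_D.+1}) : (forall i, mu i <= nu i)%N -> (mdeg (mnm_of (lo mu)) <= D)%N.
  by move=> le; rewrite mdeg_mnm_of; apply: leq_deg => i; rewrite ffunE le.
have hC mu : ((mnm_of nu == ((h mu).1 + (h mu).2)%MM) && (h' (h mu) == mu))
    = [forall i, (mu i <= nu i)%N].
  apply/idP/idP.
    case/andP=> /eqP e /eqP e2; apply/forallP=> i; have ei := mnm_of_addE i e.
    have := congr1 (fun f : {ffun 'I_n -> 'I_D.+1} => nat_of_ord (f i)) e2.
    rewrite /= ffunE inordK => [<-|]; first by rewrite ei leq_addr.
    by apply: (ltD i); rewrite ei leq_addr.
  move=> /forallP le.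
  apply/andP; split.
    apply/eqP/mnmP=> i; rewrite mnmDE !bmkE ?lo_deg // !mnm_ofE !ffunE subnKC //.
  apply/eqP/ffunP=> i; apply: val_inj.
  by rewrite /= ffunE bmkE ?lo_deg // mnm_ofE ffunE inordK.
symmetry; rewrite (reindex_onto h h').
- apply: eq_big => [mu|mu]; first exact: hC.
  rewrite hC => /forallP le.
  rewrite /= !mcoeff_strunc !bmkE ?lo_deg // !mdeg_mnm_of !mnm_ofK.
  rewrite !ifT //; apply: leq_ltn_trans hd; apply: leq_deg => i.
    by rewrite ffunE leq_subr.
  by rewrite ffunE.
- move=> [k1 k2] /= /eqP e.
  have lt1 i : (k1 i < D.+1)%N by apply: (ltD i); rewrite (mnm_of_addE i e) leq_addr.
  congr pair; apply: val_inj; rewrite /= bmkE.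
  + by apply/mnmP=> i; rewrite mnm_ofE !ffunE inordK.
  + by rewrite mdeg_mnm_of; apply: leq_deg => i; rewrite !ffunE inordK // (mnm_of_addE i e) leq_addr.
  + by apply/mnmP=> i; rewrite mnm_ofE !ffunE inordK // (mnm_of_addE i e) addKn.
  + exact: hi_deg.
Qed.

Lemma mcoeffXM (a m : 'X_{1..n}) (Q : {mpoly k[n]}) :
  ('X_[a] * Q)@_m = if (a <= m)%MM then Q@_(m - a)%MM else 0.
Proof.
case: ifP => ha.
  have -> : m = (a + (m - a))%MM.
    by apply/mnmP=> i; rewrite mnmDE mnmBE subnKC //; exact: (mnm_lepP ha).
  by rewrite mulrC mcoeffMX; congr (_@__); apply/mnmP=> i; rewrite !(mnmBE, mnmDE) addKn.
rewrite mcoeffM big1 // => kk /eqP e; rewrite mcoeffX.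
case: eqP => [ea|]; last by rewrite mul0r.
exfalso; move/negP: ha; apply; apply/mnm_lepP=> i.
have := congr1 (fun x : 'X_{1..n} => x i) e; rewrite /= mnmDE -ea => ->; exact: leq_addr.
Qed.

Lemma mcoeffM_low (P A B : {mpoly k[n]}) d (m : 'X_{1..n}) :
  (forall m', (mdeg m' < d)%N -> A@_m' = B@_m') -> (mdeg m < d)%N ->
  (P * A)@_m = (P * B)@_m.
Proof.
move=> hAB hm; rewrite !mcoeffM; apply: eq_bigr => kk e; congr (_ * _).
apply: hAB; apply: leq_ltn_trans hm; apply: (@leq_trans (mdeg (kk.1 + kk.2)%MM)).
  by rewrite mdegD leq_addl.
by rewrite -(eqP e).
Qed.

Lemma spow_struncE r j d nu : (deg nu < d)%N ->
  spow r j nu = ((strunc d r) ^+ j)@_(mnm_of nu).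
Proof.
elim: j nu => [|j IH] nu hd.
  rewrite /spow /= /sone expr0 mcoeff1.
  have -> : (mnm_of nu == 0%MM) = (nu == [ffun => 0%N]).
    apply/eqP/eqP => [e|->]; last by apply/mnmP=> i; rewrite mnm_ofE ffunE mnm0E.
    by apply/ffunP=> i; rewrite ffunE -mnm_ofE e mnm0E.
  by case: eqP.
rewrite /spow iterS -/(spow r j) (smul_struncE _ _ hd) exprS.
apply: (@mcoeffM_low _ _ _ d); last by rewrite mdeg_mnm_of.
by move=> m hm; rewrite mcoeff_strunc hm IH ?mi_ofK // deg_mi_of.
Qed.

Lemma mcoeff_strunc_spowM r j d (Q : {mpoly k[n]}) (m : 'X_{1..n}) : (mdeg m < d)%N ->
  (strunc d (spow r j) * Q)@_m = ((strunc d r) ^+ j * Q)@_m.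
Proof.
move=> hm; rewrite ![_ * Q]mulrC; apply: (mcoeffM_low _ _ hm) => m' hm'.
by rewrite mcoeff_strunc hm' (spow_struncE _ _ (d := d)) ?mi_ofK // deg_mi_of.
Qed.

Definition smono (c : k) (a : mi n) : series k n := fun nu => if nu == a then c else 0.

Lemma sone_smono : @sone k n = smono 1 [ffun => 0%N].
Proof. by []. Qed.

Lemma strunc_smono c a d :
  strunc d (smono c a) = if (deg a < d)%N then c *: 'X_[mnm_of a] else 0.
Proof.
apply/mpolyP=> m; rewrite mcoeff_strunc /smono.
case: (eqVneq (mi_of m) a) => [<-|ne].
  by rewrite deg_mi_of mi_ofK; case: ifP; rewrite ?mcoeffZ ?mcoeffX ?eqxx ?mulr1 ?mcoeff0.
have -> : (if (mdeg m < d)%N then 0 else 0) = 0 :> k by case: ifP.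
case: ifP => _; rewrite ?mcoeffZ ?mcoeffX ?mcoeff0 //.
case: eqP => [e|]; last by rewrite mulr0.
by move: ne; rewrite -e mnm_ofK eqxx.
Qed.

Lemma smul_smonoE c a s nu :
  smul (smono c a) s nu = if mi_le a nu then c * s (mi_sub nu a) else 0.
Proof.
rewrite (smul_struncE _ _ (ltnSn (deg nu))) strunc_smono.
case: (boolP (mi_le a nu)) => hle.
  have le i : (a i <= nu i)%N by exact: (forallP hle).
  rewrite ltnS leq_deg // -scalerAl mcoeffZ mcoeffXM ifT; last first.
    by apply/mnm_lepP=> i; rewrite !mnm_ofE.
  rewrite mcoeff_strunc ifT; last first.
    by rewrite ltnS -deg_mi_of; apply: leq_deg => i; rewrite ffunE mnmBE !mnm_ofE leq_subr.
  by congr (_ * s _); apply/ffunP=> i; rewrite !ffunE mnmBE !mnm_ofE.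
case: ifP => _; last by rewrite mul0r mcoeff0.
rewrite -scalerAl mcoeffZ mcoeffXM ifF ?mulr0 //.
apply/negP=> /mnm_lepP h; move/negP: hle; apply; apply/forallP=> i.
by have := h i; rewrite !mnm_ofE.
Qed.

Lemma smul_smono c a e b : smul (smono c a) (smono e b) = smono (c * e) (mi_add a b).
Proof.
apply: functional_extensionality => nu; rewrite smul_smonoE /smono.
case: ifP => hle.
  have -> : (mi_sub nu a == b) = (nu == mi_add a b).
    apply/eqP/eqP => [<-|->]; apply/ffunP=> i; rewrite !ffunE ?addKn //.
    by rewrite subnKC //; exact: (forallP hle).
  by case: ifP; rewrite ?mulr0.
case: eqP => // e'; move/negP: hle; case; apply/forallP=> i.
by rewrite e' ffunE leq_addr.
Qed.

Lemma spow_smono c a j : spow (smono c a) j = smono (c ^+ j) (mi_scale j a).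
Proof.
elim: j => [|j IH].
  by rewrite /spow /= sone_smono expr0; congr smono; apply/ffunP=> i; rewrite !ffunE muln0.
rewrite /spow iterS -/(spow _ j) IH smul_smono exprS; congr smono.
by apply/ffunP=> i; rewrite !ffunE mulnS.
Qed.

Variable p : nat.
Hypothesis hp : p \in [pchar k].

Lemma strunc_frob d r :
  (strunc d r) ^+ p = \sum_(b : 'X_{1..n < d}) r (mi_of b) ^+ p *: 'X_[(b *+ p)%MM].
Proof.
have hpA : p \in [pchar {mpoly k[n]}] by rewrite pchar_lalg.
rewrite /strunc -[LHS]/(pFrobenius_aut hpA _) rmorph_sum; apply: eq_bigr => b _.
by rewrite -[LHS]/((r (mi_of b) *: 'X_[b]) ^+ p) exprZn mpolyXn.
Qed.

Variable g : k -> k.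
Hypothesis gD : forall y z, g (y + z) = g y + g z.
Hypothesis gZ : forall c y, g (c ^+ p * y) = c * g y.

Definition frob_push x : series k n := fun mu => g (x (mi_scale p mu)).

Lemma frob_push_spowM r x : frob_push (smul (spow r p) x) = smul r (frob_push x).
Proof.
have p_gt0 := prime_gt0 (pcharf_prime hp).
have g0 : g 0 = 0 by apply: (addrI (g 0)); rewrite -gD !addr0.
apply: functional_extensionality => mu; rewrite /frob_push.
set d := (deg (mi_scale p mu)).+1.
have hdmu : (deg mu < d)%N by rewrite ltnS deg_mi_scale leq_pmulr.
rewrite (smul_struncE _ _ (ltnSn _)) (smul_struncE _ _ hdmu) -/d.
rewrite mcoeff_strunc_spowM ?mdeg_mnm_of // strunc_frob mulr_suml raddf_sum (big_morph g gD g0).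
rewrite [strunc d r]/strunc mulr_suml raddf_sum; apply: eq_bigr => b _ /=.
rewrite -!scalerAl !mcoeffZ !mcoeffXM gZ.
have -> : ((b *+ p)%MM <= mnm_of (mi_scale p mu))%MM = (b <= mnm_of mu)%MM.
  apply/mnm_lepP/mnm_lepP => h i; have := h i;
    by rewrite ?mulmnE !mnm_ofE ffunE ?mulmnE leq_pmul2r.
case: ifP => hb; last by rewrite g0.
have lt1 : (mdeg (mnm_of (mi_scale p mu) - b *+ p)%MM < d)%N.
  by rewrite ltnS mdegE /deg; apply: leq_sum => i _; rewrite mnmBE mnm_ofE leq_subr.
have lt2 : (mdeg (mnm_of mu - b)%MM < d)%N.
  apply: leq_ltn_trans hdmu; rewrite mdegE /deg; apply: leq_sum => i _.
  by rewrite mnmBE mnm_ofE leq_subr.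
rewrite !mcoeff_strunc lt1 lt2.
by congr (_ * g (x _)); apply/ffunP=> i; rewrite !ffunE mnmBE !mnm_ofE mulmnE ffunE mnmBE mnm_ofE mulnBl.
Qed.

End SeriesProduct.

Section AbsoluteValue.
Variables (k : fieldType) (abs : k -> R).
Hypothesis habs : nonarch_abs abs.

Lemma abs0 : abs 0 = R0.
Proof. exact/(abs_eq0 habs). Qed.

Lemma abs_gt0 x : x != 0 -> Rlt R0 (abs x).
Proof.
move=> /eqP hx; have : abs x <> R0 by move/(abs_eq0 habs).
have := abs_ge0 habs x; lra.
Qed.

Lemma abs1 : abs 1 = R1.
Proof.
have h := abs_mul habs 1 1; rewrite mulr1 in h.
apply: (Rmult_eq_reg_l (abs 1)); last exact/Rgt_not_eq/abs_gt0/oner_neq0.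
by rewrite -h Rmult_1_r.
Qed.

Lemma absN x : abs (- x) = abs x.
Proof.
have hN1 : abs (-1) = R1.
  have h := abs_mul habs (-1) (-1); rewrite mulrNN mulr1 abs1 in h.
  have := abs_ge0 habs (-1); nra.
by rewrite -mulN1r (abs_mul habs) hN1 Rmult_1_l.
Qed.

Lemma absV x : x != 0 -> abs x^-1 = Rinv (abs x).
Proof.
move=> hx; have h := abs_mul habs x x^-1; rewrite mulfV // abs1 in h.
have hpos := abs_gt0 hx.
by apply: (Rmult_eq_reg_l (abs x)); [rewrite -h; field|]; lra.
Qed.

Lemma absX x j : abs (x ^+ j) = pow (abs x) j.
Proof. by elim: j => [|j IH]; rewrite ?expr0 ?abs1 // exprS (abs_mul habs) IH. Qed.

Lemma abs_addr_ge a b : Rlt (abs b) (abs a) -> Rle (abs a) (abs (a + b)).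
Proof.
move=> h; have := abs_ultra habs (a + b) (- b); rewrite addrK absN.
by rewrite /Rmax; case: Rle_dec => ?; lra.
Qed.

Lemma abs_sum_lt (I : Type) (r : seq I) (P : pred I) (F : I -> k) eps :
  Rlt R0 eps -> (forall i, P i -> Rlt (abs (F i)) eps) ->
  Rlt (abs (\sum_(i <- r | P i) F i)) eps.
Proof.
move=> he hF; apply: (big_ind (fun s => Rlt (abs s) eps)) => //; first by rewrite abs0.
move=> x y hx hy; apply: Rle_lt_trans (abs_ultra habs x y) _.
by rewrite /Rmax; case: Rle_dec.
Qed.

Lemma abs_gt1 : abs_nontrivial abs -> exists t, Rlt R1 (abs t).
Proof.
case=> x [/eqP hx0 hx1]; have hpos := abs_gt0 hx0.
case: (Rlt_le_dec R1 (abs x)) => h; first by exists x.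
have hlt1 : Rlt (abs x) R1 by case: h hx1.
exists x^-1; rewrite absV //.
have -> : R1 = Rinv R1 by field.
by apply: Rinv_lt_contravar; [rewrite Rmult_1_r|].
Qed.

Section Root.
Variable p : nat.
Hypothesis p_gt0 : (0 < p)%N.

Let INR_p_gt0 : Rlt R0 (INR p).
Proof. exact/lt_0_INR/ltP. Qed.

Lemma root_abs_lt d z : Rlt R0 d -> Rlt (abs z) (pow d p) -> Rlt (root_abs abs p z) d.
Proof.
move=> hd hz; rewrite /root_abs; case: Rlt_dec => // h.
have -> : d = Rpower (pow d p) (Rinv (INR p)).
  rewrite -Rpower_pow // Rpower_mult Rinv_r ?Rpower_1 //; lra.
by apply: Rlt_Rpower_l; [apply: Rinv_0_lt_compat | split].
Qed.

Lemma root_abs_small d : Rlt R0 d ->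
  exists2 d', Rlt R0 d' & forall z, Rlt (root_abs abs p z) d' -> Rlt (abs z) d.
Proof.
move=> hd; exists (Rpower d (Rinv (INR p))); first exact: exp_pos.
move=> z; rewrite /root_abs; case: Rlt_dec => h hz; last first.
  by have := abs_ge0 habs z; lra.
apply: Rnot_le_lt => hle; move: hz; apply: Rle_not_lt.
by apply: Rle_Rpower_l; [left; apply: Rinv_0_lt_compat | lra].
Qed.

End Root.
End AbsoluteValue.

Section TateSeries.
Variables (k : fieldType) (abs : k -> R) (n : nat).
Hypothesis habs : nonarch_abs abs.
Implicit Types (r s t x y : series k n) (a nu : mi n).

Lemma tate_szero : tate abs (@szero k n).
Proof. by move=> eps he; exists 0%N => nu _; rewrite /szero abs0. Qed.

Lemma tate_sadd x y : tate abs x -> tate abs y -> tate abs (sadd x y).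
Proof.
move=> hx hy eps he; have [N1 H1] := hx eps he; have [N2 H2] := hy eps he.
exists (maxn N1 N2) => nu hnu; apply: Rle_lt_trans (abs_ultra habs _ _) _.
have := H1 nu (leq_trans (leq_maxl _ _) hnu); have := H2 nu (leq_trans (leq_maxr _ _) hnu).
by rewrite /Rmax; case: Rle_dec.
Qed.

Lemma tate_smono c a : tate abs (smono c a).
Proof.
move=> eps he; exists (deg a).+1 => nu hnu; rewrite /smono.
case: eqP => [e|_]; last by rewrite abs0.
by move: hnu; rewrite e ltnn.
Qed.

Lemma tate_restrict s t : (forall nu, s nu = t nu \/ s nu = 0) -> tate abs t -> tate abs s.
Proof.
move=> hst ht eps he; have [N HN] := ht eps he; exists N => nu hnu.
by case: (hst nu) => ->; [exact: HN | rewrite abs0].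
Qed.

Lemma ssum_coef (I : Type) (r : seq I) (P : pred I) (F : I -> series k n) nu :
  (\big[@sadd k n/@szero k n]_(i <- r | P i) F i) nu = \sum_(i <- r | P i) F i nu.
Proof. exact: (big_morph (fun s : series k n => s nu)). Qed.

Lemma sfinite_smonoE D y :
  (forall nu, (D <= deg nu)%N -> y nu = 0) ->
  y = \big[@sadd k n/@szero k n]_(b : 'X_{1..n < D}) smono (y (mi_of b)) (mi_of b).
Proof.
move=> hD; apply: functional_extensionality => nu; rewrite ssum_coef /smono.
case: (ltnP (mdeg (mnm_of nu)) D) => hnu.
  rewrite (bigD1 (BMultinom hnu)) //= mnm_ofK eqxx big1 ?addr0 // => b hb.
  case: eqP => // e; exfalso; move/negP: hb; apply; apply/eqP/val_inj.
  by rewrite /= e mi_ofK.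
rewrite hD -?mdeg_mnm_of // big1 // => b _; case: eqP => // e.
by move: hnu; rewrite e mi_ofK leqNgt bmdeg.
Qed.

Lemma tate_ssum (I : Type) (r : seq I) (P : pred I) (F : I -> series k n) :
  (forall i, P i -> tate abs (F i)) ->
  tate abs (\big[@sadd k n/@szero k n]_(i <- r | P i) F i).
Proof. by move=> h; apply: big_ind; [exact: tate_szero | exact: tate_sadd |]. Qed.

Definition sshift (a : mi n) s : series k n := fun nu => s (mi_add nu a).

Lemma tate_sshift a s : tate abs s -> tate abs (sshift a s).
Proof.
move=> hs eps he; have [N HN] := hs eps he; exists N => nu hnu; apply: HN.
by rewrite deg_mi_add (leq_trans hnu) ?leq_addr.
Qed.

Lemma smul_sshift a s :
  (forall nu, ~~ mi_le a nu -> s nu = 0) -> s = smul (smono 1 a) (sshift a s).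
Proof.
move=> h; apply: functional_extensionality => nu; rewrite smul_smonoE.
case: ifP => hle; last by rewrite h // hle.
rewrite mul1r /sshift; congr s; apply/ffunP=> i; rewrite !ffunE subnK //.
exact: (forallP hle).
Qed.

Lemma smul_sconst c s nu : smul (smono c [ffun => 0%N]) s nu = c * s nu.
Proof.
rewrite smul_smonoE ifT; last by apply/forallP=> i; rewrite ffunE.
by congr (_ * s _); apply/ffunP=> i; rewrite !ffunE subn0.
Qed.

End TateSeries.

Section PinvLinear.
Variables (k : fieldType) (abs : k -> R) (n p : nat).
Hypothesis habs : nonarch_abs abs.
Variable phi : series k n -> series k n.
Hypothesis hphi : pinv_linear abs p phi.
Implicit Types (r s x y : series k n) (a u nu : mi n).

Lemma phi_tate x : tate abs x -> tate abs (phi x).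
Proof. by case: hphi => h _ _; apply: h. Qed.

Lemma phiD x y : tate abs x -> tate abs y -> phi (sadd x y) = sadd (phi x) (phi y).
Proof. by case: hphi => _ h _; apply: h. Qed.

Lemma phiM r x : tate abs r -> tate abs x -> phi (smul (spow r p) x) = smul r (phi x).
Proof. by case: hphi => _ _ h; apply: h. Qed.

Lemma phi0 : phi (@szero k n) = @szero k n.
Proof.
have h := phiD (@tate_szero _ _ n habs) (@tate_szero _ _ n habs).
have e : sadd (@szero k n) (@szero k n) = @szero k n.
  by apply: functional_extensionality => nu; rewrite /sadd /szero addr0.
rewrite e in h; apply: functional_extensionality => nu.
have := congr1 (fun s => s nu) h; rewrite /sadd /szero => h'.
by apply: (addrI (phi (@szero k n) nu)); rewrite addr0 -h'.
Qed.

Lemma phi_ssum (I : Type) (r : seq I) (P : pred I) (F : I -> series k n) :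
  (forall i, P i -> tate abs (F i)) ->
  phi (\big[@sadd k n/@szero k n]_(i <- r | P i) F i) =
  \big[@sadd k n/@szero k n]_(i <- r | P i) phi (F i).
Proof.
move=> h; suff [] : tate abs (\big[@sadd k n/@szero k n]_(i <- r | P i) F i) /\
   phi (\big[@sadd k n/@szero k n]_(i <- r | P i) F i) =
   \big[@sadd k n/@szero k n]_(i <- r | P i) phi (F i) by [].
elim/big_rec2: _ => [|i y2 y1 Pi [ht <-]]; first by split; [exact: (@tate_szero _ _ n habs) | exact: phi0].
split; first by apply: (tate_sadd habs) => //; exact: h.
by rewrite phiD //; exact: h.
Qed.

Lemma phi_smulXp u y : tate abs y ->
  phi (smul (smono 1 (mi_scale p u)) y) = smul (smono 1 u) (phi y).
Proof.
move=> hy; rewrite -phiM //; last exact: (tate_smono habs).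
by rewrite spow_smono expr1n.
Qed.

Lemma phi_smonoZ t c a :
  phi (smono (t ^+ p * c) a) = smul (smono t [ffun => 0%N]) (phi (smono c a)).
Proof.
rewrite -phiM; try exact: (tate_smono habs).
rewrite spow_smono smul_smono; congr (phi (smono _ _)).
by apply/ffunP=> i; rewrite !ffunE.
Qed.

Lemma phi_smonoD c d a :
  phi (smono (c + d) a) = sadd (phi (smono c a)) (phi (smono d a)).
Proof.
rewrite -phiD; try exact: (tate_smono habs).
congr phi; apply: functional_extensionality => nu.
by rewrite /sadd /smono; case: ifP; rewrite ?addr0.
Qed.

End PinvLinear.

Section SplittingFromContinuousMap.
Variables (k : fieldType) (p : nat) (abs : k -> R).
Hypothesis hp : p \in [pchar k].
Hypothesis habs : nonarch_abs abs.

Let p_gt0 : (0 < p)%N := prime_gt0 (pcharf_prime hp).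

Lemma normalized_cont_map : has_nonzero_cont_map abs p ->
  exists g : k -> k, [/\ forall y z, g (y + z) = g y + g z,
    forall c y, g (c ^+ p * y) = c * g y, g 1 = 1
  & forall eps, Rlt R0 eps -> exists2 delta, Rlt R0 delta &
      forall y, Rlt (abs y) delta -> Rlt (abs (g y)) eps].
Proof.
case=> f [fD fZ [x0 /eqP hx0] fC].
have f0 : f 0 = 0 by apply: (addrI (f 0)); rewrite -fD !addr0.
have x0nz : x0 != 0 by apply: contraNneq hx0 => ->; rewrite f0.
have hx := abs_gt0 habs x0nz; have hf := abs_gt0 habs hx0.
exists (fun y => f (x0 * y) / f x0); split.
- by move=> y z; rewrite mulrDr fD mulrDl.
- by move=> c y; rewrite mulrCA fZ mulrA.
- by rewrite mulr1 mulfV.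
move=> eps he.
have [d0 [hd0 Hd0]] := fC 0 (Rmult eps (abs (f x0))) (Rmult_lt_0_compat _ _ he hf).
exists (Rdiv (pow d0 p) (abs x0)); first by apply: Rdiv_lt_0_compat => //; exact: pow_lt.
move=> y hy.
have hx0y : Rlt (abs (x0 * y)) (pow d0 p).
  rewrite (abs_mul habs).
  have -> : pow d0 p = Rmult (abs x0) (Rdiv (pow d0 p) (abs x0)) by field; lra.
  exact: Rmult_lt_compat_l.
have := Hd0 (x0 * y); rewrite subr0 f0 subr0 => /(_ (root_abs_lt p_gt0 hd0 hx0y)) hlt.
rewrite (abs_mul habs) (absV habs) //.
apply: (Rmult_lt_reg_r (abs (f x0))) => //; rewrite Rmult_assoc Rinv_l; lra.
Qed.

Lemma frobenius_split_of_cont_map n : has_nonzero_cont_map abs p -> frobenius_split abs n p.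
Proof.
case/normalized_cont_map=> g [gD gZ g1 gC].
have g0 : g 0 = 0 by apply: (addrI (g 0)); rewrite -gD !addr0.
exists (frob_push p g); split; first split.
- move=> x hx eps he; have [delta hd Hd] := gC eps he.
  have [N HN] := hx delta hd; exists N => mu hmu; apply/Hd/HN.
  by rewrite deg_mi_scale (leq_trans hmu) ?leq_pmulr.
- by move=> x y _ _; apply: functional_extensionality => mu; rewrite /frob_push /sadd gD.
- by move=> r x _ _; apply: frob_push_spowM.
apply: functional_extensionality => mu; rewrite /frob_push /sone.
have -> : (mi_scale p mu == [ffun => 0%N]) = (mu == [ffun => 0%N]).
  apply/eqP/eqP => [e|->]; apply/ffunP=> i; last by rewrite !ffunE.
  have := congr1 (fun h : mi n => h i) e; rewrite !ffunE => /eqP.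
  by rewrite muln_eq0 (negbTE (lt0n_neq0 p_gt0)) orbF => /eqP.
by case: eqP.
Qed.

End SplittingFromContinuousMap.

Section MonomialDetection.
Variables (k : fieldType) (abs : k -> R) (n p : nat).
Hypothesis habs : nonarch_abs abs.
Variable phi : series k n -> series k n.
Hypothesis hphi : pinv_linear abs p phi.

Lemma phi_coef_eq0_of_divisible (u m : mi n) y : tate abs y -> ~~ mi_le u m ->
  (forall nu, ~~ mi_le (mi_scale p u) nu -> y nu = 0) -> phi y m = 0.
Proof.
move=> hy hum hsupp; rewrite (smul_sshift hsupp) (phi_smulXp habs hphi).
  by rewrite smul_smonoE (negbTE hum).
exact: tate_sshift.
Qed.

(* The coefficient of index [m] of [phi x] only depends on the part of [x] of
   degree [< p (deg m + 1)] in every variable: the rest is divisible by some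
   [(X_i ^ (deg m + 1)) ^ p]. *)
Lemma phi_eq0_of_smono : (forall c a m, phi (smono c a) m = 0) ->
  forall x, tate abs x -> phi x = @szero k n.
Proof.
move=> H x hx; apply: functional_extensionality => m.
set N := (deg m).+1; set B := (N * p)%N.
pose big_at (nu : mi n) := [pick i | (B <= nu i)%N].
pose low : series k n := fun nu => if big_at nu is None then x nu else 0.
pose high (i : 'I_n) : series k n := fun nu => if big_at nu == Some i then x nu else 0.
have tlow : tate abs low.
  by apply: (tate_restrict habs _ hx) => nu; rewrite /low; case: (big_at nu); [right|left].
have thigh i : tate abs (high i).
  by apply: (tate_restrict habs _ hx) => nu; rewrite /high; case: eqP; [left|right].
have low_fin nu : ((n * B).+1 <= deg nu)%N -> low nu = 0.
  move=> hnu; rewrite /low /big_at; case: pickP => // hnone; exfalso.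
  move: hnu; apply/negP; rewrite -ltnNge ltnS.
  apply: (@leq_trans (\sum_(i < n) B)); last by rewrite sum_nat_const card_ord.
  by apply: leq_sum => i _; have := hnone i; rewrite /= => /negbT; rewrite -ltnNge => /ltnW.
have high_div i : phi (high i) m = 0.
  pose Ne : mi n := [ffun j => if j == i then N else 0%N].
  apply: (phi_coef_eq0_of_divisible (u := Ne)) => //.
    by apply/negP=> /forallP /(_ i); rewrite ffunE eqxx ltnNge leq_mi_deg.
  move=> nu; rewrite /high /big_at; case: pickP => [j hj|] //.
  case: eqP => // -[ji] hn; exfalso; move/negP: hn; apply; apply/forallP => l.
  by rewrite !ffunE; case: eqP => [->|_]; rewrite ?mul0n // -ji.
have -> : x = sadd low (\big[@sadd k n/@szero k n]_(i < n) high i).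
  apply: functional_extensionality => nu; rewrite /sadd ssum_coef /low /high.
  case: (big_at nu) => [j|]; last by rewrite big1 ?addr0.
  rewrite (bigD1 j) //= eqxx big1 ?addr0 ?add0r // => i hi; rewrite ifF //.
  by apply/eqP; case=> e; rewrite e eqxx in hi.
rewrite (phiD hphi) //; last by apply: (tate_ssum habs) => i _.
rewrite /sadd (phi_ssum habs hphi) // ssum_coef big1 ?addr0 //.
rewrite (sfinite_smonoE low_fin) (phi_ssum habs hphi); last by move=> b _; exact: tate_smono.
by rewrite ssum_coef big1 // => b _; rewrite H.
Qed.

End MonomialDetection.

Section DiagonalSeries.
Variables (k : fieldType) (abs : k -> R) (n' p : nat).
Hypothesis habs : nonarch_abs abs.
Hypothesis hp : p \in [pchar k].
Local Notation n := n'.+1.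
Variable phi : series k n -> series k n.
Hypothesis hphi : pinv_linear abs p phi.
Variables (a m : mi n) (eps0 : R).
Hypothesis heps0 : Rlt R0 eps0.
Local Notation f c := (phi (smono c a) m).
Variable choose : R -> R -> k.
Hypothesis chooseP : forall M d, Rlt R0 d ->
  Rlt (abs (choose M d)) d /\ Rlt M (abs (f (choose M d))).

Let p_gt0 : (0 < p)%N := prime_gt0 (pcharf_prime hp).
Implicit Types (nu : mi n).
Let i0 : 'I_n := ord0.
(* [K > m i0], so the terms beyond [c_J] do not contribute at [m + ray J]. *)
Let K := (m i0).+1.

Definition ray j : mi n := [ffun i => if i == i0 then (j * K)%N else 0%N].

(* Given [c_0, ..., c_(J-1)], the next coefficient [c_J] is chosen of absolute
   value [< 1/(J+1)], with [|f c_J|] larger than [eps0] and than the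
   contribution of the earlier terms to the coefficient [m + ray J] of the image
   of the diagonal series [sum_j c_j X^(a + p ray j)]. *)
Definition earlier (l : seq k) :=
  \sum_(j < size l) phi (smono (nth 0 l j) a) (mi_add m (ray (size l - j))).
Definition extend (l : seq k) :=
  rcons l (choose (Rmax eps0 (abs (earlier l))) (Rinv (INR (size l).+1))).
Definition coefs J := iter J extend [::].
Definition coef j := nth 0 (coefs j.+1) j.

Lemma size_coefs J : size (coefs J) = J.
Proof. by elim: J => // J IH; rewrite /coefs iterS -/(coefs J) /extend size_rcons IH. Qed.

Lemma coefE j : coef j = choose (Rmax eps0 (abs (earlier (coefs j)))) (Rinv (INR j.+1)).
Proof. by rewrite /coef /coefs iterS -/(coefs j) /extend nth_rcons size_coefs ltnn eqxx. Qed.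

Lemma nth_coefs J j : (j < J)%N -> nth 0 (coefs J) j = coef j.
Proof.
elim: J => // J IH; rewrite ltnS leq_eqVlt => /orP [/eqP -> //|hlt].
by rewrite /coefs iterS -/(coefs J) /extend nth_rcons size_coefs hlt IH.
Qed.

Let coef_choice j :
  Rlt (abs (coef j)) (Rinv (INR j.+1)) /\
  Rlt (Rmax eps0 (abs (earlier (coefs j)))) (abs (f (coef j))).
Proof. by rewrite coefE; apply: chooseP; apply/Rinv_0_lt_compat/lt_0_INR/ltP. Qed.

Definition dexp j : mi n := mi_add (mi_scale p (ray j)) a.
Definition dterm j : series k n := smono (coef j) (dexp j).
Definition dtail J : series k n := fun nu => \sum_(J <= j < (nu i0).+1) dterm j nu.

Lemma leq_dexp j : (j <= dexp j i0)%N.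
Proof.
rewrite !ffunE eqxx (leq_trans _ (leq_addr _ _)) // -mulnA leq_pmulr //.
by rewrite muln_gt0.
Qed.

Lemma dterm_eq0 j nu : (nu i0 < j)%N -> dterm j nu = 0.
Proof.
move=> h; rewrite /dterm /smono; case: eqP => // e.
by move: h; rewrite e ltnNge leq_dexp.
Qed.

Lemma dtailE J L nu : ((nu i0).+1 <= L)%N -> \sum_(J <= j < L) dterm j nu = dtail J nu.
Proof.
elim: L => // L IH; rewrite leq_eqVlt => /orP [/eqP <- //|]; rewrite ltnS => hL.
case: (leqP J L) => hJL; first by rewrite big_nat_recr //= dterm_eq0 // addr0 IH.
by rewrite big_geq // /dtail big_geq // (leq_trans hL (ltnW hJL)).
Qed.

Lemma dtail_split J nu : dtail 0 nu = \sum_(j < J) dterm j nu + dtail J nu.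
Proof.
have hL := leq_maxr J (nu i0).+1.
rewrite -(dtailE 0 hL) -(dtailE J hL).
by rewrite (big_cat_nat _ (n := J)) ?leq_maxl // big_mkord.
Qed.

Lemma dtail_eq0 J nu : ~~ mi_le (mi_scale p (ray J)) nu -> dtail J nu = 0.
Proof.
move=> hn; rewrite /dtail big_nat_cond big1 // => j /andP [/andP [hJ _] _].
rewrite /dterm /smono; case: eqP => // e; exfalso; move/negP: hn; apply.
apply/forallP=> i; rewrite e !ffunE; case: eqP => _; last by rewrite mul0n.
by rewrite (leq_trans _ (leq_addr _ _)) // !leq_pmul2r.
Qed.

Lemma deg_ray j : deg (ray j) = (j * K)%N.
Proof.
rewrite /deg (bigD1 i0) //= big1 ?addn0 ?ffunE ?eqxx // => i hi.
by rewrite ffunE (negbTE hi).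
Qed.

Lemma tate_dtail J : tate abs (dtail J).
Proof.
move=> eps he; have [N0 [hN0 N0pos]] := archimed_cor1 eps he.
exists (N0 * K * p + deg a)%N => nu hnu; apply: abs_sum_lt => // j _.
rewrite /dterm /smono; case: eqP => [e|_]; last by rewrite abs0.
move: hnu; rewrite e deg_mi_add deg_mi_scale deg_ray leq_add2r -!mulnA leq_pmul2r; last first.
  by rewrite muln_gt0 p_gt0.
move=> hj; apply: Rlt_le_trans (proj1 (coef_choice j)) _.
apply: Rle_trans (_ : Rle (Rinv (INR N0)) eps); last lra.
by apply: Rinv_le_contravar; [apply: lt_0_INR | apply/le_INR/leP/leqW].
Qed.

Lemma dtail_decomp J : dtail 0 = sadd (\big[@sadd k n/@szero k n]_(j < J) dterm j)
  (smul (smono 1 (mi_scale p (ray J))) (sshift (mi_scale p (ray J)) (dtail J))).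
Proof.
rewrite -smul_sshift; last exact: dtail_eq0.
apply: functional_extensionality => nu; rewrite /sadd ssum_coef; exact: dtail_split.
Qed.

Lemma phi_dterm_coef J j : (j <= J)%N ->
  phi (dterm j) (mi_add m (ray J)) = phi (smono (coef j) a) (mi_add m (ray (J - j))).
Proof.
move=> hj.
have -> : dterm j = smul (smono 1 (mi_scale p (ray j))) (smono (coef j) a).
  by rewrite smul_smono mul1r.
rewrite (phi_smulXp habs hphi); last exact: tate_smono.
rewrite smul_smonoE ifT; last first.
  apply/forallP=> i; rewrite !ffunE; case: eqP => _ //.
  by rewrite (leq_trans _ (leq_addl _ _)) // leq_mul2r hj orbT.
rewrite mul1r; congr (phi _ _); apply/ffunP => i; rewrite !ffunE; case: eqP => _.
  by rewrite mulnBl addnBA // leq_mul2r hj orbT.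
by rewrite !addn0 subn0.
Qed.

Lemma phi_dtail0_coef J :
  phi (dtail 0) (mi_add m (ray J)) = earlier (coefs J) + f (coef J).
Proof.
rewrite (dtail_decomp J.+1) (phiD hphi); first last.
- by rewrite -smul_sshift; [exact: tate_dtail | exact: dtail_eq0].
- by apply: (tate_ssum habs) => j _; exact: tate_smono.
rewrite /sadd (phi_smulXp habs hphi); last exact/tate_sshift/tate_dtail.
rewrite smul_smonoE ifF ?addr0; last first.
  apply/negP => /forallP /(_ i0); rewrite !ffunE eqxx mulSn [(m i0 + _)%N]addnC.
  by rewrite [(J * K + _)%N]addnC leq_add2r /K ltnn.
rewrite (phi_ssum habs hphi); last by move=> j _; exact: tate_smono.
rewrite ssum_coef big_ord_recr /= phi_dterm_coef // subnn.
have -> : mi_add m (ray 0) = m by apply/ffunP=> i; rewrite !ffunE; case: eqP; rewrite ?addn0.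
congr (_ + _); rewrite /earlier size_coefs; apply: eq_bigr => j _.
by rewrite phi_dterm_coef 1?ltnW // nth_coefs.
Qed.

Lemma diagonal_absurd : False.
Proof.
have [N HN] := phi_tate hphi (tate_dtail 0) heps0.
have := HN (mi_add m (ray N)); rewrite deg_mi_add deg_ray phi_dtail0_coef addrC.
move=> /(_ (leq_trans (leq_pmulr _ (ltn0Sn _)) (leq_addl _ _))) hlt.
have [_ hbig] := coef_choice N.
have hle : Rle (abs (f (coef N))) (abs (f (coef N) + earlier (coefs N))).
  by apply: abs_addr_ge => //; apply: Rle_lt_trans hbig; exact: Rmax_r.
apply: (Rlt_irrefl eps0); apply: Rle_lt_trans (Rmax_l _ (abs (earlier (coefs N)))) _.
apply: Rlt_trans hbig _; exact: Rle_lt_trans hle hlt.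
Qed.

End DiagonalSeries.

Section ContinuousMapFromPinvMap.
Variables (k : fieldType) (p : nat) (abs : k -> R).
Hypothesis hp : p \in [pchar k].
Hypothesis habs : nonarch_abs abs.

Let p_gt0 : (0 < p)%N := prime_gt0 (pcharf_prime hp).

(* [f (t^p z) = t f z] while [|t^p z| = |t|^p |z|]. *)
Lemma unbounded_near0 (f : k -> k) (t : k) eps0 :
  (forall c x, f (c ^+ p * x) = c * f x) -> Rlt R1 (abs t) -> Rlt R0 eps0 ->
  (forall d, Rlt R0 d -> exists z, Rlt (abs z) d /\ Rle eps0 (abs (f z))) ->
  forall M d, Rlt R0 d -> exists z, Rlt (abs z) d /\ Rlt M (abs (f z)).
Proof.
move=> fZ ht he0 far M d hd.
have hta : Rgt (Rabs (abs t)) (IZR 1) by rewrite Rabs_pos_eq; lra.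
have [j Hj] := Pow_x_infinity (abs t) hta (Rdiv (Rplus (Rabs M) R1) eps0).
have := Hj j (le_n j); rewrite Rabs_pos_eq => [Hj'|]; last by apply: pow_le; lra.
have hq : Rlt R0 (pow (abs t) (j * p)) by apply: pow_lt; lra.
have [z [hz hfz]] := far (Rdiv d (pow (abs t) (j * p))) (Rdiv_lt_0_compat _ _ hd hq).
exists ((t ^+ j) ^+ p * z); split.
  rewrite (abs_mul habs) !(absX habs) -pow_mult.
  have -> : d = Rmult (pow (abs t) (j * p)) (Rdiv d (pow (abs t) (j * p))) by field; lra.
  exact: Rmult_lt_compat_l.
rewrite fZ (abs_mul habs) (absX habs).
have hpj : Rlt R0 (pow (abs t) j) by apply: pow_lt; lra.
have h1 : Rle (Rmult (pow (abs t) j) eps0) (Rmult (pow (abs t) j) (abs (f z))).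
  by apply: Rmult_le_compat_l; lra.
have h2 : Rle (Rplus (Rabs M) R1) (Rmult (pow (abs t) j) eps0).
  have := Rmult_le_compat_r eps0 _ _ (Rlt_le _ _ he0) (Rge_le _ _ Hj').
  by rewrite /Rdiv Rmult_assoc Rinv_l ?Rmult_1_r; lra.
have := Rle_abs M; lra.
Qed.

Lemma cont_map_of_pinv_map n : (0 < n)%N -> abs_nontrivial abs ->
  has_nonzero_pinv_map abs n p -> has_nonzero_cont_map abs p.
Proof.
case: n => // n' _ hnt [phi [hphi [x0 [hx0 hnz]]]].
have [c0 [a [m hcam]]] : exists c a m, phi (smono c a) m <> 0.
  apply: NNPP => H; apply/hnz/(phi_eq0_of_smono habs hphi) => // c a m.
  by apply: NNPP => h; apply: H; exists c, a, m.
pose f c := phi (smono c a) m.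
have fD x y : f (x + y) = f x + f y by rewrite /f (phi_smonoD habs hphi).
have fZ c x : f (c ^+ p * x) = c * f x by rewrite /f (phi_smonoZ habs hphi) smul_sconst.
have fB y x : f y - f x = f (y - x) by have := fD (y - x) x; rewrite subrK => ->; rewrite addrK.
exists f; split => //; first by exists c0.
suff f_cont0 eps : Rlt R0 eps -> exists delta, Rlt R0 delta /\
    forall z, Rlt (root_abs abs p z) delta -> Rlt (abs (f z)) eps.
  move=> x eps /f_cont0 [d [hd Hd]]; exists d; split => // y hy; rewrite fB; exact: Hd.
move=> heps; apply: NNPP => Hno.
have far d : Rlt R0 d -> exists z, Rlt (abs z) d /\ Rle eps (abs (f z)).
  move=> hd; have [d' hd' Hd'] := root_abs_small habs p_gt0 hd.
  apply: NNPP => H2; apply: Hno; exists d'; split => // z hz.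
  apply: Rnot_le_lt => hle; apply: H2; exists z; split => //; exact: Hd' hz.
have [t ht] := abs_gt1 habs hnt.
have unbounded := unbounded_near0 fZ ht heps far.
pose choose M d := epsilon (inhabits 0) (fun z => Rlt (abs z) d /\ Rlt M (abs (f z))).
have chooseP M d : Rlt R0 d -> Rlt (abs (choose M d)) d /\ Rlt M (abs (f (choose M d))).
  by move=> hd; exact: epsilon_spec (inhabits 0) _ (unbounded M d hd).
exact: (@diagonal_absurd k abs n' p habs hp phi hphi a m eps heps choose chooseP).
Qed.

End ContinuousMapFromPinvMap.

Lemma nonzero_pinv_map_of_split (k : fieldType) (p : nat) (abs : k -> R) n :
  nonarch_abs abs -> frobenius_split abs n p -> has_nonzero_pinv_map abs n p.
Proof.
move=> habs [phi [hphi e]]; exists phi; split => //; exists (@sone k n); split.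
  by rewrite sone_smono; exact: tate_smono.
rewrite e => /(congr1 (fun s : series k n => s [ffun => 0%N])).
by rewrite /sone /szero eqxx; apply/eqP; exact: oner_neq0.
Qed.

Theorem theoremB (k : fieldType) (p : nat) (abs : k -> R)
    (hp : p \in [pchar k]) (habs : nonarch_abs abs)
    (hcomp : abs_complete abs) (hnt : abs_nontrivial abs) :
  [<-> forall n : nat, (0 < n)%N -> frobenius_split abs n p;
       forall n : nat, (0 < n)%N -> has_nonzero_pinv_map abs n p;
       exists2 n : nat, (0 < n)%N & has_nonzero_pinv_map abs n p;
       has_nonzero_pinv_map abs 1 p;
       frobenius_split abs 1 p;
       has_nonzero_cont_map abs p].
Proof.
have split_of_cont n := @frobenius_split_of_cont_map k p abs hp habs n.
have cont_of_pinv n := @cont_map_of_pinv_map k p abs hp habs n.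
have pinv_of_split n := @nonzero_pinv_map_of_split k p abs n habs.
tfae.
- by move=> H n hn; apply/pinv_of_split/H.
- by move=> H; exists 1%N => //; apply: H.
- by case=> n hn /(cont_of_pinv n hn hnt) /(split_of_cont 1%N) /pinv_of_split.
- by move=> /(cont_of_pinv 1%N isT hnt) /split_of_cont.
- by move=> /pinv_of_split /(cont_of_pinv 1%N isT hnt).
- by move=> H n _; apply: split_of_cont.
Qed.
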